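(* Let $\alpha\in\ell^2$. The following are equivalent: (i) $R_\alpha$ is a compact operator on $\ell^2$; (ii) $\mathcal{L}:=\lim_{n\to\infty}L([n,\infty))=0$; (iii) for every $\epsilon>0$, the associated $(\epsilon,L)$-sequence has finite length.
   Context: $\mathbb{N}=\{0,1,2,\dots\}$; $(R_\alpha f)(k)=\alpha_k\sum_{j=0}^kf(j)$. For a finite natural interval $I$: $\mu(I)=\sum_{k\in I}|\alpha_k|^2$, $\|f\|_{2,I}=(\sum_{k\in I}|f(k)|^2)^{1/2}$, $l(I,f)=\sum_{k\in I}\sum_{n\in I\setminus\{k\}}|\alpha_k\alpha_n\sum_{j=\min(k,n)+1}^{\max(k,n)}f(j)|^2$, $L(I)=(\sup_{\|f\|_{2,I}\le1}l(I,f)/\mu(I))^{1/2}$ (sup over $f$ supported in $I$; $L(I)=0$ if $\alpha$ vanishes on $I$); $L([a,\infty))=\sup_{b\ge a}L([a,b])$ (so $\mathcal L\in[0,\infty]$ is the limit of a nonincreasing sequence). $(\epsilon,L)$-sequence: $c_0=0$, $c_{k+1}=\inf\{t\in\mathbb{N}:t>c_k,\ L([c_k,t-1])>\epsilon\}$ ($\inf\emptyset=+\infty$); it has finite length $N$ if $c_N<\infty$ and $c_{N+1}=+\infty$. *)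

From Stdlib Require Import Reals.
From Coquelicot Require Import Coquelicot.
Open Scope R_scope.

Definition in_l2 (f : nat -> C) : Prop := ex_series (fun k => (Cmod (f k)) ^ 2).

Definition l2norm (f : nat -> C) : R := sqrt (Series (fun k => (Cmod (f k)) ^ 2)).

Definition Ralpha (alpha : nat -> C) (f : nat -> C) : nat -> C :=
  fun k => Cmult (alpha k) (sum_n f k).

(* Compact operator on l^2: T maps l^2 into l^2 and maps bounded sets of l^2
   to relatively compact sets of l^2 (sequential form: every bounded sequence
   has an image subsequence converging in l^2). *)
Definition compact_l2_operator (T : (nat -> C) -> (nat -> C)) : Prop :=
  (forall f, in_l2 f -> in_l2 (T f)) /\
  (forall (fs : nat -> nat -> C) (M : R),
     (forall n, in_l2 (fs n) /\ l2norm (fs n) <= M) ->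
     exists (phi : nat -> nat) (g : nat -> C),
       (forall n, (phi n < phi (S n))%nat) /\ in_l2 g /\
       is_lim_seq (fun n => l2norm (fun k => Cminus (T (fs (phi n)) k) (g k))) 0).

Definition mu (alpha : nat -> C) (a b : nat) : R :=
  sum_n_m (fun k => (Cmod (alpha k)) ^ 2) a b.

Definition norm2I (f : nat -> C) (a b : nat) : R :=
  sqrt (sum_n_m (fun k => (Cmod (f k)) ^ 2) a b).

Definition supported_in (f : nat -> C) (a b : nat) : Prop :=
  forall k, (k < a \/ b < k)%nat -> f k = 0%C.

Definition lIf (alpha : nat -> C) (a b : nat) (f : nat -> C) : R :=
  sum_n_m (fun k =>
    sum_n_m (fun n =>
      if Nat.eqb n k then 0
      else (Cmod (Cmult (Cmult (alpha k) (alpha n))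
                  (sum_n_m f (S (Nat.min k n)) (Nat.max k n)))) ^ 2) a b) a b.

(* The supremum is finite (finite-dimensional problem), so taking its real
   part is harmless. *)
Definition LI (alpha : nat -> C) (a b : nat) : R :=
  if Req_EM_T (mu alpha a b) 0 then 0
  else sqrt (real (Lub_Rbar (fun x => exists f : nat -> C,
              supported_in f a b /\ norm2I f a b <= 1 /\
              x = lIf alpha a b f / mu alpha a b))).

Definition Lray (alpha : nat -> C) (a : nat) : Rbar :=
  Lub_Rbar (fun x => exists b : nat, (a <= b)%nat /\ x = LI alpha a b).

Definition Lcal_is_zero (alpha : nat -> C) : Prop :=
  forall eps : R, 0 < eps ->
    exists N : nat, forall n : nat, (N <= n)%nat -> Rbar_lt (Lray alpha n) (Finite eps).

(* o = inf { t : nat | P t } in N u {+oo}, with None = +oo and inf(empty) = +oo. *)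
Definition is_inf_nat_opt (P : nat -> Prop) (o : option nat) : Prop :=
  match o with
  | None => forall t, ~ P t
  | Some t => P t /\ forall t', P t' -> (t <= t')%nat
  end.

Definition is_eps_L_sequence (alpha : nat -> C) (eps : R) (c : nat -> option nat) : Prop :=
  c 0%nat = Some 0%nat /\
  forall k : nat,
    match c k with
    | None => c (S k) = None
    | Some m => is_inf_nat_opt (fun t => (m < t)%nat /\ LI alpha m (t - 1) > eps) (c (S k))
    end.

Definition has_finite_length (c : nat -> option nat) : Prop :=
  exists N : nat, c N <> None /\ c (S N) = None.

(* Write [F_s(k) = f_s + ... + f_k]. Every increment in [l(I,f)] is a difference of two such
   partial sums, and the pairs straddling a point of [I] give cross terms, so [l(I,f)] is
   comparable to [mu(I) * sum_(k in I) |alpha_k|^2 |F_s(k)|^2], the contribution of [I] to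
   [||R_alpha f||^2].
   (ii) -> (i): [L([n, oo)) < eta] yields the tail Hardy inequality
   [sum_(k > N) |alpha_k|^2 |F_(N+1)(k)|^2 <= eta^2 ||f||^2], so up to [eta ||f||] the image
   [R_alpha f] only depends on the finitely many partial sums [F_0(k)], [k <= N]; a diagonal
   subsequence along which all [F_0(k)] converge therefore has convergent images.
   (i) -> (ii): otherwise there are unit vectors supported in [[n, oo)], [n] arbitrarily large,
   with images of norm [>= eps/2]; these images vanish on [[0, n)], so any [l^2] limit of a
   subsequence is [0], a contradiction.
   (ii) <-> (iii): the [(eps, L)]-sequence stops once [c_k] passes the point after which
   [L([n, oo)) < eps]; conversely [L([c, b]) > L([n, b]) / 2] for [c <= n], so if
   [L([n, oo))] does not tend to 0 some [(eps/2, L)]-sequence never stops. *)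

From Stdlib Require Import Reals.
From Coquelicot Require Import Coquelicot.
From Stdlib Require Import Arith Lra Lia Psatz Wf_nat ClassicalEpsilon Classical.
Open Scope R_scope.

(* The [R]- and [C]-specific restatements of Coquelicot's sum lemmas keep goals at type [R]
   (resp. [C]) instead of [AbelianMonoid.sort _], so that [ring] and [lra] apply to them. *)

Lemma sum_n_m_Rsplit (a : nat -> R) n m k : (n <= S m)%nat -> (m <= k)%nat ->
  sum_n_m a n k = sum_n_m a n m + sum_n_m a (S m) k.
Proof. intros. now rewrite (sum_n_m_Chasles a n m k). Qed.

Lemma sum_n_m_Rplus (a b : nat -> R) n m :
  sum_n_m (fun k => a k + b k) n m = sum_n_m a n m + sum_n_m b n m.
Proof. apply (sum_n_m_plus (G:=R_AbelianMonoid)). Qed.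

Lemma sum_n_m_Rmult_l (c : R) (a : nat -> R) n m :
  sum_n_m (fun k => c * a k) n m = c * sum_n_m a n m.
Proof. apply (sum_n_m_mult_l (K:=R_Ring)). Qed.

Lemma sum_n_m_Rmult_r (c : R) (a : nat -> R) n m :
  sum_n_m (fun k => a k * c) n m = sum_n_m a n m * c.
Proof. apply (sum_n_m_mult_r (K:=R_Ring)). Qed.

Lemma sum_n_m_Rmult_sum (u v : nat -> R) a b c d :
  sum_n_m (fun k => sum_n_m (fun n => u k * v n) c d) a b = sum_n_m u a b * sum_n_m v c d.
Proof.
  rewrite <- sum_n_m_Rmult_r. apply sum_n_m_ext. intros k. apply sum_n_m_Rmult_l.
Qed.

Lemma sum_n_m_zero_loc {G : AbelianMonoid} (a : nat -> G) n m :
  (forall k, (n <= k <= m)%nat -> a k = zero) -> sum_n_m a n m = zero.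
Proof.
  intros H. rewrite (sum_n_m_ext_loc a (fun _ => zero)) by exact H.
  apply sum_n_m_const_zero.
Qed.

Lemma sum_n_m_Rext_loc (a b : nat -> R) n m :
  (forall k, (n <= k <= m)%nat -> a k = b k) -> sum_n_m a n m = sum_n_m b n m.
Proof. exact (sum_n_m_ext_loc a b n m). Qed.

Lemma sum_n_m_Rzero_loc (a : nat -> R) n m :
  (forall k, (n <= k <= m)%nat -> a k = 0) -> sum_n_m a n m = 0.
Proof. exact (sum_n_m_zero_loc a n m). Qed.

Lemma sum_n_m_le_loc (a b : nat -> R) n m :
  (forall k, (n <= k <= m)%nat -> a k <= b k) -> sum_n_m a n m <= sum_n_m b n m.
Proof.
  intros H. destruct (le_lt_dec n m) as [Hnm|Hnm].
  - induction Hnm as [|m Hnm IH].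
    + rewrite !sum_n_n. apply H. lia.
    + rewrite !sum_n_Sm by lia.
      apply Rplus_le_compat; [apply IH; intros; apply H; lia | apply H; lia].
  - rewrite !sum_n_m_zero by lia. apply Rle_refl.
Qed.

Lemma sum_n_m_nonneg (a : nat -> R) n m :
  (forall k, (n <= k <= m)%nat -> 0 <= a k) -> 0 <= sum_n_m a n m.
Proof.
  intros H. apply Rle_trans with (sum_n_m (fun _ => 0) n m).
  - rewrite (sum_n_m_const_zero (G:=R_AbelianMonoid)). apply Rle_refl.
  - now apply sum_n_m_le_loc.
Qed.

Lemma sum_n_m_le_subrange (a : nat -> R) n m n' m' :
  (forall k, (n <= k <= m)%nat -> 0 <= a k) -> (n <= n')%nat -> (m' <= m)%nat ->
  sum_n_m a n' m' <= sum_n_m a n m.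
Proof.
  intros H Hn Hm. destruct (le_lt_dec n' m') as [H'|H'].
  2: { rewrite sum_n_m_zero by lia. now apply sum_n_m_nonneg. }
  assert (Hr : 0 <= sum_n_m a (S m') m) by (apply sum_n_m_nonneg; intros; apply H; lia).
  rewrite (sum_n_m_Rsplit a n m' m) by lia.
  destruct n' as [|n'].
  - replace n with 0%nat by lia. lra.
  - assert (0 <= sum_n_m a n n') by (apply sum_n_m_nonneg; intros; apply H; lia).
    rewrite (sum_n_m_Rsplit a n n' m') by lia. lra.
Qed.

Lemma sum_n_m_term_le (a : nat -> R) n m k :
  (forall k, (n <= k <= m)%nat -> 0 <= a k) -> (n <= k <= m)%nat -> a k <= sum_n_m a n m.
Proof. intros H Hk. rewrite <- (sum_n_n a k). apply sum_n_m_le_subrange; auto; lia. Qed.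

Lemma sum_n_m_Csplit (a : nat -> C) n m k : (n <= S m)%nat -> (m <= k)%nat ->
  sum_n_m a n k = (sum_n_m a n m + sum_n_m a (S m) k)%C.
Proof. intros. now rewrite (sum_n_m_Chasles a n m k). Qed.

Lemma sum_n_m_Cmult_l (c : C) (f : nat -> C) n m :
  sum_n_m (fun j => (c * f j)%C) n m = (c * sum_n_m f n m)%C.
Proof. apply (sum_n_m_mult_l (K:=C_Ring)). Qed.

Lemma sum_n_m_Cminus (f g : nat -> C) n m :
  sum_n_m (fun j => (f j - g j)%C) n m = (sum_n_m f n m - sum_n_m g n m)%C.
Proof.
  destruct (le_lt_dec n m) as [Hnm|Hnm].
  - induction Hnm as [|m Hnm IH].
    + now rewrite !sum_n_n.
    + rewrite !sum_n_Sm, IH by lia.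
      change (sum_n_m f n m - sum_n_m g n m + (f (S m) - g (S m))
              = sum_n_m f n m + f (S m) - (sum_n_m g n m + g (S m)))%C.
      ring.
  - rewrite !sum_n_m_zero by lia. change (RtoC 0 = RtoC 0 - RtoC 0)%C. ring.
Qed.

Lemma Cmod_sum_n_m_le (f : nat -> C) n m :
  Cmod (sum_n_m f n m) <= sum_n_m (fun j => Cmod (f j)) n m.
Proof. apply (norm_sum_n_m (V:=C_NormedModule)). Qed.

Lemma exists_pos_sqr_mul_le (A eps : R) : 0 <= A -> 0 < eps ->
  exists s, 0 < s /\ s ^ 2 * A <= eps.
Proof.
  intros HA Heps. exists (sqrt (eps / (A + 1))).
  split; [apply sqrt_lt_R0, Rdiv_lt_0_compat; lra|].
  rewrite pow2_sqrt by (apply Rlt_le, Rdiv_lt_0_compat; lra).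
  apply Rle_trans with (eps * (A / (A + 1))); [right; field; lra|].
  assert (A / (A + 1) <= 1) by (apply Rle_div_l; lra). nra.
Qed.

Definition sqmod (f : nat -> C) (k : nat) : R := Cmod (f k) ^ 2.

Lemma sqmod_nonneg f k : 0 <= sqmod f k.
Proof. apply pow2_ge_0. Qed.

Lemma Cmod_plus_sqr_le (x y : C) : Cmod (x + y)%C ^ 2 <= 2 * Cmod x ^ 2 + 2 * Cmod y ^ 2.
Proof.
  pose proof (Cmod_triangle x y). pose proof (Cmod_ge_0 x). pose proof (Cmod_ge_0 y).
  pose proof (Cmod_ge_0 (x + y)%C).
  assert (Cmod (x + y)%C ^ 2 <= (Cmod x + Cmod y) ^ 2) by (apply pow_incr; lra).
  pose proof (pow2_ge_0 (Cmod x - Cmod y)). nra.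
Qed.

Lemma Cmod_minus_sqr_le (x y : C) : Cmod (x - y)%C ^ 2 <= 2 * Cmod x ^ 2 + 2 * Cmod y ^ 2.
Proof. rewrite <- (Cmod_opp y). apply Cmod_plus_sqr_le. Qed.

Lemma mu_nonneg alpha a b : 0 <= mu alpha a b.
Proof. apply sum_n_m_nonneg. intros. apply sqmod_nonneg. Qed.

Lemma mu_Rsplit alpha a n b : (a <= S n)%nat -> (n <= b)%nat ->
  mu alpha a b = mu alpha a n + mu alpha (S n) b.
Proof. apply sum_n_m_Rsplit. Qed.

Lemma mu_le_subrange alpha a b a' b' : (a <= a')%nat -> (b' <= b)%nat ->
  mu alpha a' b' <= mu alpha a b.
Proof. apply sum_n_m_le_subrange. intros. apply sqmod_nonneg. Qed.

Lemma sqmod_le_mu alpha a b k : (a <= k <= b)%nat -> sqmod alpha k <= mu alpha a b.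
Proof. apply sum_n_m_term_le. intros. apply sqmod_nonneg. Qed.

Lemma sum_n_RS (u : nat -> R) n : sum_n u (S n) = sum_n u n + u (S n).
Proof. exact (sum_Sn u n). Qed.

Lemma sum_n_le_Series (u : nat -> R) : (forall n, 0 <= u n) -> ex_series u ->
  forall N, sum_n u N <= Series u.
Proof.
  intros Hu Hs N. apply is_lim_seq_incr_compare; [apply Series_correct, Hs|].
  intros n. rewrite sum_n_RS. specialize (Hu (S n)). lra.
Qed.

Lemma ex_series_of_bounded_sum_n (u : nat -> R) B : (forall n, 0 <= u n) ->
  (forall N, sum_n u N <= B) -> ex_series u /\ Series u <= B.
Proof.
  intros Hu HB.
  assert (Hincr : forall n, sum_n u n <= sum_n u (S n)).
  { intros n. rewrite sum_n_RS. specialize (Hu (S n)). lra. }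
  destruct (ex_finite_lim_seq_incr (sum_n u) B Hincr HB) as [l Hl].
  split; [now exists l|].
  rewrite (is_series_unique u l Hl).
  apply (is_lim_seq_le (sum_n u) (fun _ => B) l B); auto. apply is_lim_seq_const.
Qed.

Lemma l2norm_nonneg f : 0 <= l2norm f.
Proof. apply sqrt_pos. Qed.

Lemma sum_sqmod_le_l2norm f : in_l2 f -> forall N, sum_n (sqmod f) N <= l2norm f ^ 2.
Proof.
  intros Hf N. unfold l2norm. rewrite pow2_sqrt.
  - apply sum_n_le_Series; auto. apply sqmod_nonneg.
  - apply Rle_trans with (sum_n (sqmod f) 0).
    + apply sum_n_m_nonneg. intros. apply sqmod_nonneg.
    + apply sum_n_le_Series; auto. apply sqmod_nonneg.
Qed.

Lemma in_l2_of_bounded_sum f B : (forall N, sum_n (sqmod f) N <= B) ->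
  in_l2 f /\ l2norm f <= sqrt B.
Proof.
  intros H. destruct (ex_series_of_bounded_sum_n (sqmod f) B (sqmod_nonneg f) H) as [H1 H2].
  split; [exact H1|]. now apply sqrt_le_1_alt.
Qed.

Lemma Cmod_le_l2norm f k : in_l2 f -> Cmod (f k) <= l2norm f.
Proof.
  intros Hf. apply Rsqr_incr_0_var; [|apply l2norm_nonneg]. rewrite !Rsqr_pow2.
  eapply Rle_trans; [|apply (sum_sqmod_le_l2norm f Hf k)].
  apply (sum_n_m_term_le (sqmod f) 0 k k); [intros; apply sqmod_nonneg | lia].
Qed.

Lemma in_l2_minus f g : in_l2 f -> in_l2 g -> in_l2 (fun k => (f k - g k)%C).
Proof.
  intros Hf Hg. apply (in_l2_of_bounded_sum _ (2 * l2norm f ^ 2 + 2 * l2norm g ^ 2)).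
  intros N. eapply Rle_trans.
  - apply (sum_n_m_le_loc _ (fun k => 2 * sqmod f k + 2 * sqmod g k)).
    intros. apply Cmod_minus_sqr_le.
  - rewrite sum_n_m_Rplus, !sum_n_m_Rmult_l.
    pose proof (sum_sqmod_le_l2norm f Hf N). pose proof (sum_sqmod_le_l2norm g Hg N).
    unfold sum_n in *. lra.
Qed.

Lemma in_l2_of_close f g B : in_l2 f ->
  (forall K, sum_n (sqmod (fun k => (f k - g k)%C)) K <= B) -> in_l2 g.
Proof.
  intros Hf Hfg. apply (in_l2_of_bounded_sum g (2 * l2norm f ^ 2 + 2 * B)).
  intros K. eapply Rle_trans.
  - apply (sum_n_m_le_loc _ (fun k => 2 * sqmod f k + 2 * sqmod (fun k => (f k - g k)%C) k)).
    intros k _. unfold sqmod. replace (g k) with (f k - (f k - g k))%C at 1 by ring.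
    apply Cmod_minus_sqr_le.
  - rewrite sum_n_m_Rplus, !sum_n_m_Rmult_l.
    pose proof (sum_sqmod_le_l2norm f Hf K). pose proof (Hfg K). unfold sum_n in *. lra.
Qed.

Lemma l2norm_lim_0 (h : nat -> nat -> C) :
  (forall eps, 0 < eps -> exists N, forall n, (N <= n)%nat ->
     forall K, sum_n (sqmod (h n)) K <= eps) ->
  is_lim_seq (fun n => l2norm (h n)) 0.
Proof.
  intros H. apply is_lim_seq_spec. intros [eps Heps]. simpl.
  destruct (H ((eps / 2) ^ 2)) as [N HN]; [nra|].
  exists N. intros n Hn. destruct (in_l2_of_bounded_sum (h n) _ (HN n Hn)) as [_ Hle].
  rewrite sqrt_pow2 in Hle by lra.
  rewrite Rminus_0_r, Rabs_pos_eq by apply l2norm_nonneg. lra.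
Qed.

Lemma norm2I_sqr f a b : norm2I f a b ^ 2 = sum_n_m (sqmod f) a b.
Proof.
  unfold norm2I. rewrite pow2_sqrt; [reflexivity|].
  apply sum_n_m_nonneg. intros. apply sqmod_nonneg.
Qed.

Lemma sum_sqmod_le_norm2I_sqr f a b n m :
  supported_in f a b -> sum_n_m (sqmod f) n m <= norm2I f a b ^ 2.
Proof.
  intros Hs. rewrite norm2I_sqr.
  assert (Hout : forall k, (k < a \/ b < k)%nat -> sqmod f k = 0).
  { intros k Hk. unfold sqmod. rewrite Hs by exact Hk. rewrite Cmod_0. ring. }
  apply Rle_trans with (sum_n_m (sqmod f) (Nat.min n a) (Nat.max m b)).
  { apply sum_n_m_le_subrange; [intros; apply sqmod_nonneg | lia | lia]. }
  destruct (le_lt_dec a b) as [Hab|Hab].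
  2: { rewrite sum_n_m_Rzero_loc by (intros k Hk; apply Hout; lia).
       apply sum_n_m_nonneg. intros. apply sqmod_nonneg. }
  rewrite (sum_n_m_Rsplit _ _ b) by lia.
  rewrite (sum_n_m_Rzero_loc _ (S b)) by (intros k Hk; apply Hout; lia).
  destruct a as [|a].
  - replace (Nat.min n 0) with 0%nat by lia. simpl. lra.
  - rewrite (sum_n_m_Rsplit _ _ a) by lia.
    rewrite (sum_n_m_Rzero_loc _ (Nat.min n (S a))) by (intros k Hk; apply Hout; lia).
    simpl. lra.
Qed.

Lemma supported_in_l2 f a b : supported_in f a b -> norm2I f a b <= 1 ->
  in_l2 f /\ l2norm f <= 1.
Proof.
  intros Hs Hn. rewrite <- sqrt_1. apply in_l2_of_bounded_sum. intros N.
  eapply Rle_trans; [apply (sum_sqmod_le_norm2I_sqr f a b 0 N Hs)|].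
  assert (0 <= norm2I f a b) by apply sqrt_pos. nra.
Qed.

(** * The quadratic form [l(I,f)] and the constants [L(I)] *)

Definition lIf_term (alpha f : nat -> C) (k n : nat) : R :=
  if Nat.eqb n k then 0
  else Cmod (Cmult (Cmult (alpha k) (alpha n))
                   (sum_n_m f (S (Nat.min k n)) (Nat.max k n))) ^ 2.

Lemma lIf_double_sum alpha a b f :
  lIf alpha a b f = sum_n_m (fun k => sum_n_m (lIf_term alpha f k) a b) a b.
Proof. reflexivity. Qed.

Lemma lIf_term_nonneg alpha f k n : 0 <= lIf_term alpha f k n.
Proof. unfold lIf_term. destruct (Nat.eqb n k); [lra | apply pow2_ge_0]. Qed.

Lemma lIf_term_neq alpha f k n : k <> n ->
  lIf_term alpha f k n =
  sqmod alpha k * sqmod alpha n * Cmod (sum_n_m f (S (Nat.min k n)) (Nat.max k n)) ^ 2.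
Proof.
  intros Hkn. unfold lIf_term, sqmod. destruct (Nat.eqb_spec n k); [lia|].
  rewrite !Cmod_mult. ring.
Qed.

Lemma lIf_nonneg alpha a b f : 0 <= lIf alpha a b f.
Proof.
  apply sum_n_m_nonneg. intros. apply sum_n_m_nonneg. intros. apply lIf_term_nonneg.
Qed.

Lemma lIf_le_shrink_left alpha a a' b f : (a <= a')%nat -> lIf alpha a' b f <= lIf alpha a b f.
Proof.
  intros Ha. rewrite !lIf_double_sum.
  apply Rle_trans with (sum_n_m (fun k => sum_n_m (lIf_term alpha f k) a b) a' b).
  - apply sum_n_m_le_loc. intros k _.
    apply sum_n_m_le_subrange; auto. intros. apply lIf_term_nonneg.
  - apply sum_n_m_le_subrange; auto.
    intros. apply sum_n_m_nonneg. intros. apply lIf_term_nonneg.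
Qed.

(* [f a] never occurs: the increments in [l(I,f)] start at index [min k n + 1]. *)
Lemma lIf_ext_loc alpha a b f g : (forall j, (S a <= j <= b)%nat -> f j = g j) ->
  lIf alpha a b f = lIf alpha a b g.
Proof.
  intros H. apply sum_n_m_ext_loc. intros k Hk. apply sum_n_m_ext_loc. intros n Hn.
  rewrite (sum_n_m_ext_loc f g); [reflexivity|].
  intros j Hj. apply H. lia.
Qed.

Lemma lIf_scal alpha a b f (c : C) :
  lIf alpha a b (fun j => (c * f j)%C) = Cmod c ^ 2 * lIf alpha a b f.
Proof.
  rewrite !lIf_double_sum, <- sum_n_m_Rmult_l. apply sum_n_m_Rext_loc. intros k _.
  rewrite <- sum_n_m_Rmult_l. apply sum_n_m_Rext_loc. intros n _. unfold lIf_term.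
  destruct (Nat.eqb n k); [ring|].
  rewrite sum_n_m_Cmult_l, !Cmod_mult. ring.
Qed.

Lemma lIf_mu_0 alpha a b f : mu alpha a b = 0 -> lIf alpha a b f = 0.
Proof.
  intros Hmu.
  assert (Hw : forall k, (a <= k <= b)%nat -> sqmod alpha k = 0).
  { intros k Hk. pose proof (sqmod_le_mu alpha a b k Hk). pose proof (sqmod_nonneg alpha k).
    lra. }
  rewrite lIf_double_sum. apply sum_n_m_Rzero_loc. intros k Hk.
  apply sum_n_m_Rzero_loc. intros n Hn.
  destruct (Nat.eq_dec k n) as [<-|Hkn].
  - unfold lIf_term. now rewrite Nat.eqb_refl.
  - rewrite lIf_term_neq, Hw by auto. ring.
Qed.

Lemma lIf_le_crude alpha a b f : (forall j, Cmod (f j) <= 1) ->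
  lIf alpha a b f <= mu alpha a b ^ 2 * INR (S b) ^ 2.
Proof.
  intros Hf. rewrite lIf_double_sum.
  apply Rle_trans with (sum_n_m (fun k => sum_n_m (fun n =>
      sqmod alpha k * (sqmod alpha n * INR (S b) ^ 2)) a b) a b).
  - apply sum_n_m_le_loc. intros k Hk. apply sum_n_m_le_loc. intros n Hn.
    pose proof (sqmod_nonneg alpha n). pose proof (sqmod_nonneg alpha k).
    pose proof (pow2_ge_0 (INR (S b))).
    destruct (Nat.eq_dec k n) as [<-|Hkn].
    { unfold lIf_term. rewrite Nat.eqb_refl. nra. }
    rewrite lIf_term_neq by exact Hkn.
    set (F := sum_n_m f (S (Nat.min k n)) (Nat.max k n)).
    assert (HF : Cmod F <= INR (S b)).
    { eapply Rle_trans; [apply Cmod_sum_n_m_le|].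
      eapply Rle_trans; [apply (sum_n_m_le_loc _ (fun _ => 1)); auto|].
      rewrite sum_n_m_const, Rmult_1_r. apply le_INR. lia. }
    assert (Cmod F ^ 2 <= INR (S b) ^ 2) by (pose proof (Cmod_ge_0 F); apply pow_incr; lra).
    assert (0 <= sqmod alpha k * sqmod alpha n) by nra. nra.
  - rewrite sum_n_m_Rmult_sum, sum_n_m_Rmult_r. unfold mu. fold (sqmod alpha).
    apply Req_le. ring.
Qed.

(* For [s = 0] these are partial sums of [||R_alpha f||^2]. *)
Definition hardy_form (alpha f : nat -> C) (s a b : nat) : R :=
  sum_n_m (fun k => sqmod alpha k * Cmod (sum_n_m f s k) ^ 2) a b.

Lemma hardy_form_ext_loc alpha f g s a b : (forall j, (s <= j <= b)%nat -> f j = g j) ->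
  hardy_form alpha f s a b = hardy_form alpha g s a b.
Proof.
  intros H. apply sum_n_m_ext_loc. intros k Hk.
  rewrite (sum_n_m_ext_loc f g); [reflexivity|]. intros j Hj. apply H. lia.
Qed.

Lemma sum_n_m_Cdiff (f : nat -> C) s x y : (s <= S x)%nat -> (x <= y)%nat ->
  sum_n_m f (S x) y = (sum_n_m f s y - sum_n_m f s x)%C.
Proof.
  intros. rewrite (sum_n_m_Csplit f s x y) by lia.
  assert (E : forall u v : C, v = (u + v - u)%C) by (intros; ring). apply E.
Qed.

Lemma lIf_term_le_partial_sums alpha f s k n : (s <= S (Nat.min k n))%nat ->
  let P j := Cmod (sum_n_m f s j) ^ 2 in
  lIf_term alpha f k n <=
  2 * (sqmod alpha k * P k * sqmod alpha n) + 2 * (sqmod alpha k * (sqmod alpha n * P n)).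
Proof.
  intros Hs P.
  pose proof (sqmod_nonneg alpha k). pose proof (sqmod_nonneg alpha n).
  assert (0 <= P k) by apply pow2_ge_0. assert (0 <= P n) by apply pow2_ge_0.
  destruct (Nat.eq_dec k n) as [<-|Hkn].
  { unfold lIf_term. rewrite Nat.eqb_refl. nra. }
  rewrite lIf_term_neq by exact Hkn.
  assert (Cmod (sum_n_m f (S (Nat.min k n)) (Nat.max k n)) ^ 2 <= 2 * P k + 2 * P n).
  { destruct (le_lt_dec k n).
    - rewrite Nat.min_l, Nat.max_r, (sum_n_m_Cdiff f s) by lia.
      pose proof (Cmod_minus_sqr_le (sum_n_m f s n) (sum_n_m f s k)). unfold P. lra.
    - rewrite Nat.min_r, Nat.max_l, (sum_n_m_Cdiff f s) by lia.
      pose proof (Cmod_minus_sqr_le (sum_n_m f s k) (sum_n_m f s n)). unfold P. lra. }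
  assert (0 <= sqmod alpha k * sqmod alpha n) by nra. nra.
Qed.

Lemma lIf_le_hardy_form alpha a b f s : (s <= S a)%nat ->
  lIf alpha a b f <= 4 * mu alpha a b * hardy_form alpha f s a b.
Proof.
  intros Hs. set (P j := Cmod (sum_n_m f s j) ^ 2). rewrite lIf_double_sum.
  apply Rle_trans with (sum_n_m (fun k => sum_n_m (fun n =>
      2 * (sqmod alpha k * P k * sqmod alpha n)) a b
    + sum_n_m (fun n => 2 * (sqmod alpha k * (sqmod alpha n * P n))) a b) a b).
  - apply sum_n_m_le_loc. intros k Hk. rewrite <- sum_n_m_Rplus.
    apply sum_n_m_le_loc. intros n Hn. apply lIf_term_le_partial_sums. lia.
  - rewrite sum_n_m_Rplus.
    rewrite (sum_n_m_Rext_loc _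
               (fun k => 2 * sum_n_m (fun n => sqmod alpha k * P k * sqmod alpha n) a b))
      by (intros; apply sum_n_m_Rmult_l).
    rewrite (sum_n_m_Rext_loc (fun k => sum_n_m (fun n => 2 * _) a b)
               (fun k => 2 * sum_n_m (fun n => sqmod alpha k * (sqmod alpha n * P n)) a b))
      by (intros; apply sum_n_m_Rmult_l).
    rewrite !sum_n_m_Rmult_l, !sum_n_m_Rmult_sum.
    unfold hardy_form, mu, P. fold (sqmod alpha). apply Req_le. ring.
Qed.

(* If [g] vanishes on [(N0, N]], every pair [k <= N < n] contributes [|alpha_k alpha_n G_n|^2],
   with [G_n = g_(N+1) + ... + g_n]. *)
Lemma lIf_ge_hardy_form alpha N0 N b (g : nat -> C) : (N0 <= N)%nat ->
  (forall j, (S N0 <= j <= N)%nat -> g j = 0%C) ->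
  2 * mu alpha N0 N * hardy_form alpha g (S N) (S N) b <= lIf alpha N0 b g.
Proof.
  intros HN Hg. set (G n := Cmod (sum_n_m g (S N) n) ^ 2).
  destruct (le_lt_dec b N) as [Hb|Hb].
  { unfold hardy_form. rewrite sum_n_m_zero by lia.
    change (2 * mu alpha N0 N * 0 <= lIf alpha N0 b g). rewrite Rmult_0_r. apply lIf_nonneg. }
  assert (HG : forall x y, (N0 <= x <= N)%nat -> (S N <= y)%nat ->
            sum_n_m g (S x) y = sum_n_m g (S N) y).
  { intros x y Hx Hy. rewrite (sum_n_m_Csplit g (S x) N y) by lia.
    rewrite (sum_n_m_zero_loc g (S x) N) by (intros; apply Hg; lia). apply Cplus_0_l. }
  assert (Hterm : forall k n, (N0 <= k <= N)%nat -> (S N <= n)%nat ->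
            lIf_term alpha g k n = sqmod alpha k * (sqmod alpha n * G n) /\
            lIf_term alpha g n k = sqmod alpha n * G n * sqmod alpha k).
  { intros k n Hk Hn. rewrite !lIf_term_neq by lia.
    rewrite Nat.min_l, Nat.max_r, (Nat.min_r n k), (Nat.max_l n k), HG by lia.
    unfold G. split; ring. }
  rewrite lIf_double_sum, (sum_n_m_Rsplit _ N0 N b) by lia.
  apply Rle_trans with
    (sum_n_m (fun k => sum_n_m (fun n => sqmod alpha k * (sqmod alpha n * G n)) (S N) b) N0 N
     + sum_n_m (fun n => sum_n_m (fun k => sqmod alpha n * G n * sqmod alpha k) N0 N) (S N) b).
  - rewrite !sum_n_m_Rmult_sum. unfold hardy_form, mu. fold (sqmod alpha). apply Req_le.
    unfold G. ring.
  - apply Rplus_le_compat; apply sum_n_m_le_loc; intros k Hk.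
    + eapply Rle_trans; [|apply (sum_n_m_le_subrange _ N0 b (S N) b); try lia;
                            intros; apply lIf_term_nonneg].
      apply Req_le. apply sum_n_m_Rext_loc. intros n Hn. symmetry. apply Hterm; lia.
    + eapply Rle_trans; [|apply (sum_n_m_le_subrange _ N0 b N0 N); try lia;
                            intros; apply lIf_term_nonneg].
      apply Req_le. apply sum_n_m_Rext_loc. intros n Hn. symmetry. apply Hterm; lia.
Qed.

Definition lIf_ratios (alpha : nat -> C) (a b : nat) : R -> Prop := fun x =>
  exists f : nat -> C,
    supported_in f a b /\ norm2I f a b <= 1 /\ x = lIf alpha a b f / mu alpha a b.

Lemma Lub_lIf_ratios alpha a b : mu alpha a b <> 0 ->
  Lub_Rbar (lIf_ratios alpha a b) = Finite (LI alpha a b ^ 2).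
Proof.
  intros Hmu. assert (Hmu0 : 0 < mu alpha a b) by (pose proof (mu_nonneg alpha a b); lra).
  destruct (Lub_Rbar_correct (lIf_ratios alpha a b)) as [Hub Hlub].
  assert (Hle : Rbar_le (Lub_Rbar (lIf_ratios alpha a b)) (mu alpha a b * INR (S b) ^ 2)).
  { apply Hlub. intros x [f [Hs [Hn ->]]]. cbn [Rbar_le]. apply Rle_div_l; [exact Hmu0|].
    pose proof (lIf_le_crude alpha a b f) as Hcrude.
    assert (Hf1 : forall j, Cmod (f j) <= 1).
    { intros j. destruct (supported_in_l2 f a b Hs Hn) as [Hl2 Hnorm].
      eapply Rle_trans; [apply Cmod_le_l2norm|]; eauto. }
    specialize (Hcrude Hf1). eapply Rle_trans; [exact Hcrude | right; ring]. }
  assert (Hge : Rbar_le 0 (Lub_Rbar (lIf_ratios alpha a b))).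
  { apply Hub. exists (fun _ => 0%C). split; [now intros k _|]. split.
    - unfold norm2I. rewrite sum_n_m_Rzero_loc, sqrt_0; [lra|].
      intros. rewrite Cmod_0. ring.
    - replace (lIf alpha a b (fun _ => 0%C)) with 0; [unfold Rdiv; ring|].
      rewrite (lIf_ext_loc alpha a b _ (fun j => (0 * 0)%C)) by (intros; ring).
      rewrite lIf_scal, Cmod_0. ring. }
  unfold LI. destruct (Req_EM_T (mu alpha a b) 0) as [E|_]; [contradiction|].
  fold (lIf_ratios alpha a b).
  destruct (Lub_Rbar (lIf_ratios alpha a b)) as [r| |]; cbn [Rbar_le real] in *; try easy.
  now rewrite pow2_sqrt.
Qed.

Lemma LI_nonneg alpha a b : 0 <= LI alpha a b.
Proof. unfold LI. destruct (Req_EM_T (mu alpha a b) 0); [lra | apply sqrt_pos]. Qed.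

Lemma lIf_le_LI_sqr alpha a b f : mu alpha a b <> 0 -> supported_in f a b ->
  norm2I f a b <= 1 -> lIf alpha a b f <= LI alpha a b ^ 2 * mu alpha a b.
Proof.
  intros Hmu Hs Hn. assert (Hmu0 : 0 < mu alpha a b) by (pose proof (mu_nonneg alpha a b); lra).
  destruct (Lub_Rbar_correct (lIf_ratios alpha a b)) as [Hub _].
  rewrite Lub_lIf_ratios in Hub by exact Hmu.
  apply Rle_div_l; [exact Hmu0|]. apply (Hub (lIf alpha a b f / mu alpha a b)).
  now exists f.
Qed.

(* Homogeneity: [l(I,.)] is quadratic, so normalising [f] gives the general bound. *)
Lemma lIf_le_LI_sqr_norm2I alpha a b f : supported_in f a b ->
  lIf alpha a b f <= LI alpha a b ^ 2 * mu alpha a b * norm2I f a b ^ 2.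
Proof.
  intros Hs. pose proof (LI_nonneg alpha a b). pose proof (mu_nonneg alpha a b).
  destruct (Req_EM_T (mu alpha a b) 0) as [Hmu|Hmu].
  { rewrite lIf_mu_0, Hmu by exact Hmu. lra. }
  set (n := norm2I f a b). assert (Hn : 0 <= n) by apply sqrt_pos.
  destruct (Req_EM_T n 0) as [Hn0|Hn0].
  - assert (Hf0 : forall j, (a <= j <= b)%nat -> f j = 0%C).
    { intros j Hj. apply Cmod_eq_0.
      assert (Hj2 : sqmod f j <= n ^ 2).
      { unfold n. rewrite norm2I_sqr.
        apply sum_n_m_term_le; [intros; apply sqmod_nonneg | exact Hj]. }
      rewrite Hn0 in Hj2. unfold sqmod in Hj2. pose proof (Cmod_ge_0 (f j)). nra. }
    rewrite (lIf_ext_loc alpha a b f (fun j => (0 * f j)%C)).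
    + rewrite lIf_scal, Cmod_0, Hn0. nra.
    + intros j Hj. rewrite Hf0 by lia. ring.
  - set (c := RtoC (/ n)).
    assert (Hc : Cmod c ^ 2 * n ^ 2 = 1).
    { unfold c. rewrite Cmod_R, pow2_abs. field. exact Hn0. }
    assert (Hg : lIf alpha a b (fun j => (c * f j)%C) <= LI alpha a b ^ 2 * mu alpha a b).
    { apply lIf_le_LI_sqr; [exact Hmu | intros k Hk; rewrite Hs by exact Hk; ring |].
      apply Rsqr_incr_0_var; [|lra]. rewrite !Rsqr_pow2, norm2I_sqr.
      unfold sqmod. rewrite (sum_n_m_Rext_loc _ (fun k => Cmod c ^ 2 * sqmod f k))
        by (intros; unfold sqmod; rewrite Cmod_mult; ring).
      rewrite sum_n_m_Rmult_l, <- norm2I_sqr. fold n. lra. }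
    rewrite lIf_scal in Hg.
    replace (lIf alpha a b f) with (Cmod c ^ 2 * lIf alpha a b f * n ^ 2)
      by (transitivity (Cmod c ^ 2 * n ^ 2 * lIf alpha a b f); [| rewrite Hc]; ring).
    apply Rmult_le_compat_r; [apply pow2_ge_0 | exact Hg].
Qed.

Lemma LI_gt_witness alpha a b e : 0 <= e -> e < LI alpha a b ->
  0 < mu alpha a b /\ exists f, supported_in f a b /\ norm2I f a b <= 1 /\
     e ^ 2 * mu alpha a b < lIf alpha a b f.
Proof.
  intros He HL. pose proof (mu_nonneg alpha a b).
  destruct (Req_EM_T (mu alpha a b) 0) as [Hmu|Hmu].
  { unfold LI in HL. destruct (Req_EM_T (mu alpha a b) 0); [lra | contradiction]. }
  split; [lra|]. apply NNPP. intros Hno.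
  destruct (Lub_Rbar_correct (lIf_ratios alpha a b)) as [_ Hlub].
  rewrite Lub_lIf_ratios in Hlub by exact Hmu.
  assert (Hle : Rbar_le (LI alpha a b ^ 2) (e ^ 2)).
  { apply Hlub. intros x [f [Hs [Hn ->]]]. cbn [Rbar_le]. apply Rle_div_l; [lra|].
    apply Rnot_lt_le. intros Hlt. apply Hno. now exists f. }
  cbn [Rbar_le] in Hle. pose proof (LI_nonneg alpha a b). nra.
Qed.

Lemma LI_le_Lray alpha a b : (a <= b)%nat -> Rbar_le (LI alpha a b) (Lray alpha a).
Proof.
  intros Hab. destruct (Lub_Rbar_correct
    (fun x => exists b : nat, (a <= b)%nat /\ x = LI alpha a b)) as [Hub _].
  apply Hub. now exists b.
Qed.

Lemma LI_lt_of_Lray_lt alpha a (eta : R) : Rbar_lt (Lray alpha a) eta ->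
  forall b, (a <= b)%nat -> LI alpha a b < eta.
Proof.
  intros H b Hb. pose proof (LI_le_Lray alpha a b Hb).
  destruct (Lray alpha a); cbn [Rbar_le Rbar_lt] in *; try easy. lra.
Qed.

Lemma LI_gt_of_Lray_not_lt alpha a (e e' : R) : ~ Rbar_lt (Lray alpha a) e -> e' < e ->
  exists b, (a <= b)%nat /\ e' < LI alpha a b.
Proof.
  intros H He. apply NNPP. intros Hno. apply H.
  destruct (Lub_Rbar_correct
    (fun x => exists b : nat, (a <= b)%nat /\ x = LI alpha a b)) as [_ Hlub].
  assert (Hle : Rbar_le (Lray alpha a) e').
  { apply Hlub. intros x [b [Hb ->]]. cbn [Rbar_le].
    apply Rnot_lt_le. intros Hlt. apply Hno. now exists b. }
  destruct (Lray alpha a); cbn [Rbar_le Rbar_lt] in *; try easy. lra.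
Qed.

Lemma not_Lcal_is_zero alpha : ~ Lcal_is_zero alpha ->
  exists e, 0 < e /\ forall N, exists n b, (N <= n <= b)%nat /\ e < LI alpha n b.
Proof.
  intros HL. apply not_all_ex_not in HL as [eps HL]. apply imply_to_and in HL as [Heps HL].
  exists (eps / 2). split; [lra|]. intros N.
  destruct (classic (exists n, (N <= n)%nat /\ ~ Rbar_lt (Lray alpha n) eps))
    as [[n [Hn Hlt]]|Hno].
  - destruct (LI_gt_of_Lray_not_lt alpha n eps (eps / 2) Hlt) as [b [Hb HLb]]; [lra|].
    exists n, b. split; [lia | exact HLb].
  - exfalso. apply HL. exists N. intros n Hn. apply NNPP. intros Hlt. apply Hno.
    now exists n.
Qed.

(** * Tail estimates for [R_alpha] *)

Definition restrict (f : nat -> C) (a b : nat) (j : nat) : C :=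
  if andb (Nat.leb a j) (Nat.leb j b) then f j else 0%C.

Lemma restrict_in f a b j : (a <= j <= b)%nat -> restrict f a b j = f j.
Proof.
  intros Hj. unfold restrict.
  destruct (Nat.leb_spec a j), (Nat.leb_spec j b); simpl; auto; lia.
Qed.

Lemma restrict_out f a b j : ~ (a <= j <= b)%nat -> restrict f a b j = 0%C.
Proof.
  intros Hj. unfold restrict.
  destruct (Nat.leb_spec a j), (Nat.leb_spec j b); simpl; auto; lia.
Qed.

Lemma supported_in_restrict f a b a' b' : (a' <= a)%nat -> (b <= b')%nat ->
  supported_in (restrict f a b) a' b'.
Proof. intros Ha Hb j Hj. apply restrict_out. lia. Qed.

Lemma norm2I_restrict_sqr f a N K : (a <= N <= K)%nat ->
  norm2I (restrict f (S N) K) a K ^ 2 = sum_n_m (sqmod f) (S N) K.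
Proof.
  intros HN. rewrite norm2I_sqr, (sum_n_m_Rsplit _ a N K) by lia.
  rewrite sum_n_m_Rzero_loc.
  - rewrite Rplus_0_l. apply sum_n_m_Rext_loc. intros j Hj. unfold sqmod.
    now rewrite restrict_in.
  - intros j Hj. unfold sqmod. rewrite restrict_out, Cmod_0 by lia. ring.
Qed.

Lemma mu_doubling alpha N0 p : in_l2 alpha -> (N0 <= p)%nat -> 0 < sqmod alpha p ->
  exists N, (p <= N)%nat /\ forall K, (N <= K)%nat -> mu alpha N0 K <= 2 * mu alpha N0 N.
Proof.
  intros Ha Hp Hwp.
  destruct (Cauchy_ex_series _ Ha (mkposreal _ Hwp)) as [N1 HN1]. simpl in HN1.
  exists (Nat.max p N1). split; [lia|]. intros K HK.
  rewrite (mu_Rsplit alpha N0 (Nat.max p N1) K) by lia.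
  assert (Htail : Rabs (mu alpha (S (Nat.max p N1)) K) < sqmod alpha p) by (apply HN1; lia).
  apply Rabs_def2 in Htail as [Htail _].
  assert (sqmod alpha p <= mu alpha N0 (Nat.max p N1)) by (apply sqmod_le_mu; lia). lra.
Qed.

Lemma hardy_form_le_of_LI alpha f N0 N K eta : (N0 <= N <= K)%nat ->
  0 < mu alpha N0 N -> mu alpha N0 K <= 2 * mu alpha N0 N -> LI alpha N0 K <= eta ->
  hardy_form alpha f (S N) (S N) K <= eta ^ 2 * sum_n_m (sqmod f) (S N) K.
Proof.
  intros HN Hmu Hdbl HLI. set (g := restrict f (S N) K).
  assert (Hfg : hardy_form alpha f (S N) (S N) K = hardy_form alpha g (S N) (S N) K).
  { apply hardy_form_ext_loc. intros j Hj. unfold g. now rewrite restrict_in. }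
  (* Sandwich [l([N0, K], g)] between its cross terms and its bound through [L([N0, K])]. *)
  pose proof (lIf_ge_hardy_form alpha N0 N K g (proj1 HN)) as Hlow.
  pose proof (lIf_le_LI_sqr_norm2I alpha N0 K g) as Hup.
  unfold g in Hup. rewrite norm2I_restrict_sqr in Hup by lia.
  rewrite <- Hfg in Hlow.
  assert (HS : 0 <= sum_n_m (sqmod f) (S N) K)
    by (apply sum_n_m_nonneg; intros; apply sqmod_nonneg).
  assert (HL2 : LI alpha N0 K ^ 2 <= eta ^ 2)
    by (pose proof (LI_nonneg alpha N0 K); apply pow_incr; lra).
  assert (H : 2 * mu alpha N0 N * hardy_form alpha f (S N) (S N) K
              <= 2 * mu alpha N0 N * (eta ^ 2 * sum_n_m (sqmod f) (S N) K)).
  { eapply Rle_trans; [apply Hlow; intros j Hj; apply restrict_out; lia|].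
    eapply Rle_trans; [apply Hup; apply supported_in_restrict; lia|].
    pose proof (mu_nonneg alpha N0 K). pose proof (pow2_ge_0 (LI alpha N0 K)).
    apply Rle_trans with (eta ^ 2 * mu alpha N0 K * sum_n_m (sqmod f) (S N) K).
    - apply Rmult_le_compat_r; [exact HS|]. apply Rmult_le_compat_r; lra.
    - assert (0 <= eta ^ 2 * sum_n_m (sqmod f) (S N) K)
        by (apply Rmult_le_pos; [apply pow2_ge_0 | exact HS]).
      nra. }
  apply Rmult_le_reg_l in H; lra.
Qed.

Lemma hardy_tail_bound alpha : in_l2 alpha -> Lcal_is_zero alpha ->
  forall eta, 0 < eta -> exists N, forall (f : nat -> C) K,
    hardy_form alpha f (S N) (S N) K <= eta ^ 2 * sum_n_m (sqmod f) (S N) K.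
Proof.
  intros Ha HL eta Heta. destruct (HL eta Heta) as [N0 HN0].
  destruct (classic (exists p, (N0 <= p)%nat /\ 0 < sqmod alpha p)) as [[p [Hp Hwp]]|Hno].
  - destruct (mu_doubling alpha N0 p Ha Hp Hwp) as [N [HpN Hdbl]].
    exists N. intros f K. destruct (le_lt_dec K N) as [HK|HK].
    { unfold hardy_form. rewrite sum_n_m_zero by lia.
      apply Rmult_le_pos; [apply pow2_ge_0 | apply sum_n_m_nonneg; intros; apply sqmod_nonneg]. }
    apply (hardy_form_le_of_LI alpha f N0 N K eta); [lia | | apply Hdbl; lia |].
    + eapply Rlt_le_trans; [exact Hwp | apply sqmod_le_mu; lia].
    + apply Rlt_le, (LI_lt_of_Lray_lt alpha N0); [apply HN0|]; lia.
  - exists N0. intros f K. apply Rle_trans with 0.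
    2: apply Rmult_le_pos; [apply pow2_ge_0 | apply sum_n_m_nonneg; intros; apply sqmod_nonneg].
    right. apply sum_n_m_Rzero_loc. intros k Hk. assert (Hw : sqmod alpha k = 0).
    { destruct (sqmod_nonneg alpha k) as [Hpos|]; [|easy].
      exfalso. apply Hno. exists k. split; [lia | exact Hpos]. }
    rewrite Hw. ring.
Qed.

Lemma sqmod_Ralpha alpha f k : sqmod (Ralpha alpha f) k = sqmod alpha k * Cmod (sum_n f k) ^ 2.
Proof. unfold sqmod, Ralpha. rewrite Cmod_mult. ring. Qed.

Lemma Ralpha_minus alpha f g k :
  (Ralpha alpha f k - Ralpha alpha g k)%C = Ralpha alpha (fun j => (f j - g j)%C) k.
Proof. unfold Ralpha, sum_n. rewrite sum_n_m_Cminus. ring. Qed.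

Lemma mu_le_l2norm alpha a b : in_l2 alpha -> mu alpha a b <= l2norm alpha ^ 2.
Proof.
  intros Ha. eapply Rle_trans; [|apply (sum_sqmod_le_l2norm alpha Ha b)].
  apply mu_le_subrange; lia.
Qed.

Lemma Ralpha_tail_bound alpha : in_l2 alpha -> Lcal_is_zero alpha ->
  forall eta, 0 < eta -> exists N, forall (f : nat -> C) B,
  (forall K, sum_n (sqmod f) K <= B) -> forall K,
  sum_n (sqmod (Ralpha alpha f)) K <= sum_n (sqmod (Ralpha alpha f)) N
    + 2 * Cmod (sum_n f N) ^ 2 * l2norm alpha ^ 2 + 2 * eta ^ 2 * B.
Proof.
  intros Ha HL eta Heta. destruct (hardy_tail_bound alpha Ha HL eta Heta) as [N HN].
  exists N. intros f B HB K.
  set (W := l2norm alpha ^ 2). set (F := Cmod (sum_n f N) ^ 2).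
  assert (HB0 : 0 <= B) by (eapply Rle_trans; [apply sum_n_m_nonneg | apply (HB 0%nat)];
                            intros; apply sqmod_nonneg).
  assert (HW : 0 <= W) by apply pow2_ge_0. assert (HF : 0 <= F) by apply pow2_ge_0.
  assert (Heta2 : 0 <= eta ^ 2) by apply pow2_ge_0.
  destruct (le_lt_dec K N) as [HK|HK].
  { assert (sum_n (sqmod (Ralpha alpha f)) K <= sum_n (sqmod (Ralpha alpha f)) N)
      by (apply sum_n_m_le_subrange; [intros; apply sqmod_nonneg | lia | exact HK]).
    nra. }
  unfold sum_n at 1. rewrite (sum_n_m_Rsplit _ 0 N K), Rplus_assoc by lia.
  apply Rplus_le_compat_l.
  apply Rle_trans with (sum_n_m (fun k => 2 * F * sqmod alpha k
        + 2 * (sqmod alpha k * Cmod (sum_n_m f (S N) k) ^ 2)) (S N) K).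
  - apply sum_n_m_le_loc. intros k Hk. rewrite sqmod_Ralpha.
    unfold sum_n. rewrite (sum_n_m_Csplit f 0 N k) by lia.
    pose proof (Cmod_plus_sqr_le (sum_n_m f 0 N) (sum_n_m f (S N) k)).
    pose proof (sqmod_nonneg alpha k). unfold F, sum_n. nra.
  - rewrite sum_n_m_Rplus, !sum_n_m_Rmult_l. apply Rplus_le_compat.
    + apply Rmult_le_compat_l; [lra | apply mu_le_l2norm, Ha].
    + rewrite Rmult_assoc. apply Rmult_le_compat_l; [lra|]. eapply Rle_trans; [apply HN|].
      apply Rmult_le_compat_l; [exact Heta2|]. eapply Rle_trans; [|apply (HB K)].
      apply sum_n_m_le_subrange; [intros; apply sqmod_nonneg | lia | lia].
Qed.

Lemma Ralpha_in_l2 alpha f : in_l2 alpha -> Lcal_is_zero alpha -> in_l2 f ->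
  in_l2 (Ralpha alpha f).
Proof.
  intros Ha HL Hf. destruct (Ralpha_tail_bound alpha Ha HL 1 Rlt_0_1) as [N HN].
  exact (proj1 (in_l2_of_bounded_sum _ _ (HN f _ (sum_sqmod_le_l2norm f Hf)))).
Qed.

Lemma Ralpha_minus_bound alpha : in_l2 alpha -> Lcal_is_zero alpha ->
  forall eta, 0 < eta -> exists N, forall (f g : nat -> C) B s,
  (forall K, sum_n (sqmod f) K <= B) -> (forall K, sum_n (sqmod g) K <= B) ->
  (forall k, (k <= N)%nat -> Cmod (sum_n f k - sum_n g k)%C <= s) ->
  forall K, sum_n (sqmod (fun k => (Ralpha alpha f k - Ralpha alpha g k)%C)) K
            <= 3 * s ^ 2 * l2norm alpha ^ 2 + 8 * eta ^ 2 * B.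
Proof.
  intros Ha HL eta Heta. destruct (Ralpha_tail_bound alpha Ha HL eta Heta) as [N HN].
  exists N. intros f g B s Hf Hg Hclose K. set (d j := (f j - g j)%C).
  assert (Hd : forall K, sum_n (sqmod d) K <= 4 * B).
  { intros K'. eapply Rle_trans.
    - apply (sum_n_m_le_loc _ (fun j => 2 * sqmod f j + 2 * sqmod g j)).
      intros. apply Cmod_minus_sqr_le.
    - rewrite sum_n_m_Rplus, !sum_n_m_Rmult_l.
      pose proof (Hf K'). pose proof (Hg K'). unfold sum_n in *. lra. }
  assert (Hclose2 : forall k, (k <= N)%nat -> Cmod (sum_n d k) ^ 2 <= s ^ 2).
  { intros k Hk. unfold d, sum_n. rewrite sum_n_m_Cminus.
    apply pow_incr. split; [apply Cmod_ge_0 | apply Hclose, Hk]. }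
  assert (Hhead : sum_n (sqmod (Ralpha alpha d)) N <= s ^ 2 * l2norm alpha ^ 2).
  { eapply Rle_trans.
    - apply (sum_n_m_le_loc _ (fun k => s ^ 2 * sqmod alpha k)). intros k Hk.
      rewrite sqmod_Ralpha, Rmult_comm. apply Rmult_le_compat_r; [apply sqmod_nonneg|].
      apply Hclose2. lia.
    - rewrite sum_n_m_Rmult_l. apply Rmult_le_compat_l; [apply pow2_ge_0|].
      apply mu_le_l2norm, Ha. }
  rewrite (sum_n_ext _ (sqmod (Ralpha alpha d)))
    by (intros; unfold sqmod; now rewrite Ralpha_minus).
  eapply Rle_trans; [apply (HN d (4 * B) Hd K)|].
  assert (2 * Cmod (sum_n d N) ^ 2 * l2norm alpha ^ 2 <= 2 * s ^ 2 * l2norm alpha ^ 2)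
    by (apply Rmult_le_compat_r; [apply pow2_ge_0 | pose proof (Hclose2 N (le_n N)); lra]).
  lra.
Qed.

Lemma Ralpha_close_of_partial_sums_close alpha : in_l2 alpha -> Lcal_is_zero alpha ->
  forall B eps, 0 <= B -> 0 < eps -> exists N s, 0 < s /\ forall f g : nat -> C,
  (forall K, sum_n (sqmod f) K <= B) -> (forall K, sum_n (sqmod g) K <= B) ->
  (forall k, (k <= N)%nat -> Cmod (sum_n f k - sum_n g k)%C <= s) ->
  forall K, sum_n (sqmod (fun k => (Ralpha alpha f k - Ralpha alpha g k)%C)) K <= eps.
Proof.
  intros Ha HL B eps HB Heps.
  destruct (exists_pos_sqr_mul_le (8 * B) (eps / 2)) as [eta [Heta Heta2]]; [lra | lra|].
  destruct (exists_pos_sqr_mul_le (3 * l2norm alpha ^ 2) (eps / 2)) as [s [Hs Hs2]];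
    [pose proof (pow2_ge_0 (l2norm alpha)); lra | lra|].
  destruct (Ralpha_minus_bound alpha Ha HL eta Heta) as [N HN].
  exists N, s. split; [exact Hs|]. intros f g Hf Hg Hclose K.
  eapply Rle_trans; [apply (HN f g B s Hf Hg Hclose K)|]. nra.
Qed.

(** * Diagonal extraction *)

Definition increasing_nat (s : nat -> nat) : Prop := forall n, (s n < s (S n))%nat.

Lemma increasing_nat_lt s : increasing_nat s -> forall a b, (a < b)%nat -> (s a < s b)%nat.
Proof. intros Hs a b Hab. induction Hab; [apply Hs|]. specialize (Hs m). lia. Qed.

Lemma increasing_nat_ge_id s : increasing_nat s -> forall n, (n <= s n)%nat.
Proof. intros Hs n. induction n; [lia|]. specialize (Hs n). lia. Qed.

Lemma increasing_nat_comp s t : increasing_nat s -> increasing_nat t ->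
  increasing_nat (fun n => s (t n)).
Proof. intros Hs Ht n. now apply increasing_nat_lt. Qed.

Definition Ccv (u : nat -> C) (l : C) : Prop :=
  forall eps, 0 < eps -> exists N, forall n, (N <= n)%nat -> Cmod (u n - l)%C < eps.

Lemma Bolzano_Weierstrass_R (u : nat -> R) B : (forall n, Rabs (u n) <= B) ->
  exists s, increasing_nat s /\ exists l, Un_cv (fun n => u (s n)) l.
Proof.
  intros HB.
  destruct (Bolzano_Weierstrass u (fun c => -B <= c <= B) (compact_P3 (-B) B)) as [l Hl].
  { intros n. specialize (HB n). apply Rabs_le_between in HB. lra. }
  assert (Hnear : forall N k, {p | (N <= p)%nat /\ Rabs (u p - l) < / INR (S k)}).
  { intros N k. apply constructive_indefinite_description.
    assert (Hk : 0 < / INR (S k)) by (apply Rinv_0_lt_compat, lt_0_INR; lia).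
    destruct (Hl (disc l (mkposreal _ Hk)) N) as [p [Hp Hup]].
    - exists (mkposreal _ Hk). now intros y Hy.
    - now exists p. }
  set (s := fix s n := match n with
                       | 0%nat => proj1_sig (Hnear 0%nat 0%nat)
                       | S m => proj1_sig (Hnear (S (s m)) (S m)) end).
  assert (Hs : forall n, Rabs (u (s n) - l) < / INR (S n)).
  { intros [|n]; [apply (proj2_sig (Hnear 0%nat 0%nat)) | apply (proj2_sig (Hnear _ (S n)))]. }
  exists s. split; [intros n; exact (proj1 (proj2_sig (Hnear (S (s n)) (S n))))|].
  exists l. intros eps Heps. destruct (archimed_cor1 eps Heps) as [N [HN HN0]].
  exists N. intros n Hn. eapply Rlt_trans; [apply Hs|]. eapply Rle_lt_trans; [|exact HN].
  apply Rinv_le_contravar; [now apply lt_0_INR | apply le_INR; lia].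
Qed.

Lemma Bolzano_Weierstrass_C (u : nat -> C) B : (forall n, Cmod (u n) <= B) ->
  exists s, increasing_nat s /\ exists l, Ccv (fun n => u (s n)) l.
Proof.
  intros HB.
  destruct (Bolzano_Weierstrass_R (fun n => fst (u n)) B) as [s1 [Hs1 [l1 Hl1]]].
  { intros n. eapply Rle_trans; [|apply HB].
    eapply Rle_trans; [apply Rmax_l | apply Rmax_Cmod]. }
  destruct (Bolzano_Weierstrass_R (fun n => snd (u (s1 n))) B) as [s2 [Hs2 [l2 Hl2]]].
  { intros n. eapply Rle_trans; [|apply (HB (s1 n))].
    eapply Rle_trans; [apply Rmax_r | apply Rmax_Cmod]. }
  exists (fun n => s1 (s2 n)). split; [now apply increasing_nat_comp|].
  exists (l1, l2). intros eps Heps.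
  destruct (Hl1 (eps / 2)) as [N1 HN1]; [lra|].
  destruct (Hl2 (eps / 2)) as [N2 HN2]; [lra|].
  exists (Nat.max N1 N2). intros n Hn.
  pose proof (HN1 (s2 n)) as H1. pose proof (HN2 n) as H2. unfold R_dist in H1, H2.
  pose proof (increasing_nat_ge_id s2 Hs2 n).
  specialize (H1 ltac:(lia)). specialize (H2 ltac:(lia)).
  set (z := (u (s1 (s2 n)) - (l1, l2))%C).
  assert (Hmax : Rmax (Rabs (fst z)) (Rabs (snd z)) < eps / 2)
    by (apply Rmax_lub_lt; [exact H1 | exact H2]).
  assert (0 <= Rmax (Rabs (fst z)) (Rabs (snd z)))
    by (eapply Rle_trans; [apply Rabs_pos | apply Rmax_l]).
  assert (Hsqrt2 : sqrt 2 < 2)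
    by (rewrite <- (sqrt_pow2 2) at 2 by lra; apply sqrt_lt_1_alt; lra).
  eapply Rle_lt_trans; [apply Cmod_2Rmax|]. pose proof (sqrt_pos 2). nra.
Qed.

Section Diagonal.

Variable x : nat -> nat -> C.

Variable refine : (nat -> nat) -> nat -> nat -> nat.
Hypothesis refine_increasing : forall p k, increasing_nat (refine p k).
Hypothesis refine_cv : forall p k, exists l, Ccv (fun n => x (p (refine p k n)) k) l.

Fixpoint diagonal_stage (k : nat) : nat -> nat :=
  match k with
  | 0%nat => refine (fun n => n) 0%nat
  | S k' => fun n => diagonal_stage k' (refine (diagonal_stage k') (S k') n)
  end.

Lemma diagonal_stage_increasing k : increasing_nat (diagonal_stage k).
Proof. induction k; simpl; [apply refine_increasing | now apply increasing_nat_comp]. Qed.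

Lemma diagonal_stage_cv k : exists l, Ccv (fun n => x (diagonal_stage k n) k) l.
Proof. destruct k; simpl; [apply (refine_cv (fun n => n)) | apply refine_cv]. Qed.

Lemma diagonal_stage_sub k d m :
  exists t, (m <= t)%nat /\ diagonal_stage (k + d) m = diagonal_stage k t.
Proof.
  revert m. induction d as [|d IH]; intros m.
  - exists m. now rewrite Nat.add_0_r.
  - rewrite Nat.add_succ_r. simpl.
    destruct (IH (refine (diagonal_stage (k + d)) (S (k + d)) m)) as [t [Ht Heq]].
    exists t. split; [|exact Heq].
    pose proof (increasing_nat_ge_id _ (refine_increasing (diagonal_stage (k + d)) (S (k + d))) m).
    lia.
Qed.

Lemma diagonal_increasing : increasing_nat (fun n => diagonal_stage n n).
Proof.
  intros n. simpl. apply increasing_nat_lt; [apply diagonal_stage_increasing|].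
  pose proof (increasing_nat_ge_id _ (refine_increasing (diagonal_stage n) (S n)) (S n)). lia.
Qed.

Lemma diagonal_cv k : exists l, Ccv (fun n => x (diagonal_stage n n) k) l.
Proof.
  destruct (diagonal_stage_cv k) as [l Hl]. exists l. intros eps Heps.
  destruct (Hl eps Heps) as [N HN]. exists (Nat.max N k). intros n Hn.
  destruct (diagonal_stage_sub k (n - k) n) as [t [Ht Heq]].
  replace (k + (n - k))%nat with n in Heq by lia. rewrite Heq. apply HN. lia.
Qed.

End Diagonal.

Lemma diagonal_extraction (x : nat -> nat -> C) :
  (forall k, exists B, forall n, Cmod (x n k) <= B) ->
  exists phi, increasing_nat phi /\ forall k, exists l, Ccv (fun n => x (phi n) k) l.
Proof.
  intros Hb.
  assert (Hrefine : forall (p : nat -> nat) k,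
     {s | increasing_nat s /\ exists l, Ccv (fun n => x (p (s n)) k) l}).
  { intros p k. apply constructive_indefinite_description.
    destruct (Hb k) as [B HB]. now apply (Bolzano_Weierstrass_C (fun n => x (p n) k) B). }
  set (refine p k := proj1_sig (Hrefine p k)).
  assert (Hinc : forall p k, increasing_nat (refine p k))
    by (intros; apply (proj2_sig (Hrefine p k))).
  assert (Hcv : forall p k, exists l, Ccv (fun n => x (p (refine p k n)) k) l)
    by (intros; apply (proj2_sig (Hrefine p k))).
  exists (fun n => diagonal_stage refine n n). split.
  - now apply diagonal_increasing.
  - now apply diagonal_cv.
Qed.

Lemma Ccv_uniform_finite (u : nat -> nat -> C) (l : nat -> C) :
  (forall k, Ccv (fun n => u n k) (l k)) ->
  forall K eps, 0 < eps -> exists N, forall n, (N <= n)%nat ->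
    forall k, (k <= K)%nat -> Cmod (u n k - l k)%C < eps.
Proof.
  intros H K eps Heps. induction K as [|K [N1 HN1]].
  - destruct (H 0%nat eps Heps) as [N HN]. exists N. intros n Hn k Hk.
    replace k with 0%nat by lia. auto.
  - destruct (H (S K) eps Heps) as [N2 HN2]. exists (Nat.max N1 N2). intros n Hn k Hk.
    destruct (Nat.eq_dec k (S K)) as [->|]; [apply HN2 | apply HN1]; lia.
Qed.

Lemma weighted_sum_Ccv_small (w : nat -> R) (u : nat -> nat -> C) (l : nat -> C) :
  (forall k, 0 <= w k) -> (forall k, Ccv (fun n => u n k) (l k)) ->
  forall K eps, 0 < eps -> exists N, forall n, (N <= n)%nat ->
    sum_n (fun k => w k * Cmod (u n k - l k)%C ^ 2) K <= eps.
Proof.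
  intros Hw Hcv K eps Heps. set (W := sum_n w K).
  assert (HW : 0 <= W) by (apply sum_n_m_nonneg; auto).
  destruct (exists_pos_sqr_mul_le W eps HW Heps) as [s [Hs Hs2]].
  destruct (Ccv_uniform_finite u l Hcv K s Hs) as [N HN]. exists N. intros n Hn.
  eapply Rle_trans; [|exact Hs2]. rewrite Rmult_comm. unfold W, sum_n.
  rewrite <- sum_n_m_Rmult_r. apply sum_n_m_le_loc. intros k Hk.
  apply Rmult_le_compat_l; [apply Hw|]. apply pow_incr.
  split; [apply Cmod_ge_0 | apply Rlt_le, HN; lia].
Qed.

(** * Sufficiency of [L([n, oo)) -> 0] *)

Lemma Cmod_sqr_le_split (x y z : C) :
  Cmod (x - z)%C ^ 2 <= 2 * Cmod (x - y)%C ^ 2 + 2 * Cmod (y - z)%C ^ 2.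
Proof.
  replace (x - z)%C with ((x - y) - - (y - z))%C by ring.
  rewrite <- (Cmod_opp (y - z)). apply Cmod_minus_sqr_le.
Qed.

Lemma Ralpha_cv_of_partial_sums_cv alpha : in_l2 alpha -> Lcal_is_zero alpha ->
  forall (f : nat -> nat -> C) (G : nat -> C) B,
  (forall n K, sum_n (sqmod (f n)) K <= B) -> (forall k, Ccv (fun n => sum_n (f n) k) (G k)) ->
  forall eps, 0 < eps -> exists N, forall n, (N <= n)%nat -> forall K,
    sum_n (sqmod (fun k => (Ralpha alpha (f n) k - alpha k * G k)%C)) K <= eps.
Proof.
  intros Ha HL f G B Hf HG eps Heps.
  assert (HB : 0 <= B) by (eapply Rle_trans; [apply sum_n_m_nonneg | apply (Hf 0%nat 0%nat)];
                           intros; apply sqmod_nonneg).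
  destruct (Ralpha_close_of_partial_sums_close alpha Ha HL B (eps / 4) HB)
    as [N [s [Hs Hclose]]]; [lra|].
  destruct (Ccv_uniform_finite _ _ HG N (s / 2)) as [N1 HN1]; [lra|].
  exists N1. intros n Hn K.
  destruct (weighted_sum_Ccv_small (sqmod alpha) _ _ (sqmod_nonneg alpha) HG K (eps / 4))
    as [N2 HN2]; [lra|].
  set (m := Nat.max N1 N2).
  set (Rnm k := (Ralpha alpha (f n) k - Ralpha alpha (f m) k)%C).
  assert (Hnm : forall K', sum_n (sqmod Rnm) K' <= eps / 4).
  { apply Hclose; [apply Hf | apply Hf|]. intros k Hk.
    replace (sum_n (f n) k - sum_n (f m) k)%C
      with ((sum_n (f n) k - G k) - (sum_n (f m) k - G k))%C by ring.
    eapply Rle_trans; [apply Cmod_triangle|]. rewrite Cmod_opp.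
    pose proof (HN1 n Hn k Hk). pose proof (HN1 m ltac:(lia) k Hk). lra. }
  specialize (HN2 m ltac:(lia)).
  eapply Rle_trans.
  - apply (sum_n_m_le_loc _ (fun k => 2 * sqmod Rnm k
                                     + 2 * (sqmod alpha k * Cmod (sum_n (f m) k - G k)%C ^ 2))).
    intros k _. unfold sqmod at 1 2.
    replace (sqmod alpha k * Cmod (sum_n (f m) k - G k)%C ^ 2)
      with (Cmod (Ralpha alpha (f m) k - alpha k * G k)%C ^ 2)
      by (unfold Ralpha, sqmod; rewrite <- Rpow_mult_distr, <- Cmod_mult; do 2 f_equal; ring).
    apply Cmod_sqr_le_split.
  - rewrite sum_n_m_Rplus, !sum_n_m_Rmult_l. specialize (Hnm K). unfold sum_n in *. lra.
Qed.

Lemma Ralpha_compact alpha : in_l2 alpha -> Lcal_is_zero alpha ->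
  compact_l2_operator (Ralpha alpha).
Proof.
  intros Ha HL. split; [intros f; now apply Ralpha_in_l2|].
  intros fs M Hfs.
  assert (HM : 0 <= M)
    by (destruct (Hfs 0%nat) as [_ H]; pose proof (l2norm_nonneg (fs 0%nat)); lra).
  assert (Hpart : forall n K, sum_n (sqmod (fs n)) K <= M ^ 2).
  { intros n K. destruct (Hfs n) as [Hl2 Hn]. eapply Rle_trans; [now apply sum_sqmod_le_l2norm|].
    apply pow_incr. split; [apply l2norm_nonneg | exact Hn]. }
  assert (Hbounded : forall k, exists B, forall n, Cmod (sum_n (fs n) k) <= B).
  { intros k. exists (INR (S k) * M). intros n. eapply Rle_trans; [apply Cmod_sum_n_m_le|].
    eapply Rle_trans; [apply (sum_n_m_le_loc _ (fun _ => M))|].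
    - intros j _. destruct (Hfs n) as [Hl2 Hn].
      eapply Rle_trans; [now apply Cmod_le_l2norm | exact Hn].
    - rewrite sum_n_m_const, Nat.sub_0_r. lra. }
  destruct (diagonal_extraction (fun n k => sum_n (fs n) k) Hbounded) as [phi [Hphi Hcv]].
  destruct (choice (fun k l => Ccv (fun n => sum_n (fs (phi n)) k) l) Hcv) as [G HG].
  pose proof (Ralpha_cv_of_partial_sums_cv alpha Ha HL (fun n => fs (phi n)) G (M ^ 2)
                (fun n => Hpart (phi n)) HG) as Hlim.
  exists phi, (fun k => (alpha k * G k)%C). split; [exact Hphi|]. split.
  - destruct (Hlim 1 Rlt_0_1) as [N HN].
    apply (in_l2_of_close (Ralpha alpha (fs (phi N))) _ 1); [|exact (HN N (le_n N))].
    apply Ralpha_in_l2; auto. apply Hfs.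
  - apply l2norm_lim_0. exact Hlim.
Qed.

(** * Necessity of [L([n, oo)) -> 0] *)

Lemma Ralpha_large_on_block alpha n b e : 0 <= e -> e < LI alpha n b ->
  exists f, in_l2 f /\ l2norm f <= 1 /\ (forall j, (j < n)%nat -> f j = 0%C) /\
    e ^ 2 / 4 < sum_n (sqmod (Ralpha alpha f)) b.
Proof.
  intros He HLI. destruct (LI_gt_witness alpha n b e He HLI) as [Hmu [f [Hs [Hn Hlf]]]].
  destruct (supported_in_l2 f n b Hs Hn) as [Hl2 Hnorm].
  exists f. split; [exact Hl2|]. split; [exact Hnorm|]. split; [intros j Hj; apply Hs; lia|].
  pose proof (lIf_le_hardy_form alpha n b f 0 (Nat.le_0_l _)) as Hup.
  assert (Hh : e ^ 2 / 4 < hardy_form alpha f 0 n b) by nra.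
  eapply Rlt_le_trans; [exact Hh|]. unfold hardy_form.
  rewrite (sum_n_m_Rext_loc _ (sqmod (Ralpha alpha f))) by (intros; now rewrite sqmod_Ralpha).
  apply sum_n_m_le_subrange; [intros; apply sqmod_nonneg | lia | lia].
Qed.

Lemma l2_limit_of_vanishing_heads (h : nat -> nat -> C) (g : nat -> C) :
  (forall n k, (k < n)%nat -> h n k = 0%C) -> (forall n, in_l2 (h n)) -> in_l2 g ->
  is_lim_seq (fun n => l2norm (fun k => (h n k - g k)%C)) 0 -> forall k, g k = 0%C.
Proof.
  intros Hh Hl2 Hg Hlim k. apply Cmod_eq_0. apply Rle_antisym; [|apply Cmod_ge_0].
  assert (Hle : Rbar_le (Cmod (g k)) 0).
  { refine (is_lim_seq_le_loc (fun _ => Cmod (g k)) _ _ _ _ (is_lim_seq_const _) Hlim).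
    exists (S k). intros n Hn.
    eapply Rle_trans; [|apply Cmod_le_l2norm with (k := k), in_l2_minus; auto].
    cbv beta. rewrite Hh by lia. replace (0 - g k)%C with (- g k)%C by ring.
    rewrite Cmod_opp. apply Rle_refl. }
  exact Hle.
Qed.

Lemma Lcal_is_zero_of_compact alpha : compact_l2_operator (Ralpha alpha) -> Lcal_is_zero alpha.
Proof.
  intros [HRl2 Hcomp]. apply NNPP. intros HL.
  destruct (not_Lcal_is_zero alpha HL) as [e [He Hfar]].
  assert (Hfs : forall N, exists f, in_l2 f /\ l2norm f <= 1 /\
                  (forall j, (j < N)%nat -> f j = 0%C) /\
                  exists b, e ^ 2 / 4 < sum_n (sqmod (Ralpha alpha f)) b).
  { intros N. destruct (Hfar N) as [n [b [Hnb HLI]]].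
    destruct (Ralpha_large_on_block alpha n b e) as [f [Hl2 [Hn [Hhead Hbig]]]]; [lra | exact HLI|].
    exists f. repeat split; auto; [intros j Hj; apply Hhead; lia | now exists b]. }
  destruct (choice _ Hfs) as [fs Hfs'].
  destruct (Hcomp fs 1) as [phi [g [Hphi [Hg Hlim]]]]; [intros n; split; apply Hfs'|].
  assert (Hg0 : forall k, g k = 0%C).
  { apply (l2_limit_of_vanishing_heads (fun n => Ralpha alpha (fs (phi n)))); auto.
    - intros n k Hk. unfold Ralpha, sum_n. rewrite sum_n_m_zero_loc; [apply Cmult_0_r|].
      intros j Hj. apply Hfs'. pose proof (increasing_nat_ge_id phi Hphi n). lia.
    - intros n. apply HRl2, Hfs'. }
  apply is_lim_seq_spec in Hlim. destruct (Hlim (mkposreal (e / 2) ltac:(lra))) as [N HN].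
  specialize (HN N (le_n N)). simpl in HN.
  rewrite Rminus_0_r, Rabs_pos_eq in HN by apply l2norm_nonneg.
  destruct (Hfs' (phi N)) as [Hl2 [_ [_ [b Hb]]]].
  pose proof (sum_sqmod_le_l2norm _ (in_l2_minus _ _ (HRl2 _ Hl2) Hg) b) as Hle.
  rewrite (sum_n_ext _ (sqmod (Ralpha alpha (fs (phi N))))) in Hle
    by (intros k; unfold sqmod; rewrite Hg0; f_equal; f_equal; ring).
  pose proof (l2norm_nonneg (fun k => (Ralpha alpha (fs (phi N)) k - g k)%C)). nra.
Qed.

(** * The [(eps, L)]-sequences *)

Lemma eps_L_sequence_index_le alpha eps c : is_eps_L_sequence alpha eps c ->
  forall k m, c k = Some m -> (k <= m)%nat.
Proof.
  intros [Hc0 Hstep] k. induction k as [|k IH]; intros m Hm; [lia|].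
  specialize (Hstep k). destruct (c k) as [m'|]; [|congruence].
  rewrite Hm in Hstep. destruct Hstep as [[Hlt _] _]. specialize (IH m' eq_refl). lia.
Qed.

Lemma eps_L_sequence_defined_or_finite alpha eps c : is_eps_L_sequence alpha eps c ->
  forall k, c k <> None \/ has_finite_length c.
Proof.
  intros [Hc0 _] k. induction k as [|k [Hk|Hfin]]; [left; congruence | | now right].
  destruct (c (S k)) eqn:E; [left; congruence | right; now exists k].
Qed.

Lemma finite_length_of_Lcal_is_zero alpha : Lcal_is_zero alpha ->
  forall eps, 0 < eps -> forall c, is_eps_L_sequence alpha eps c -> has_finite_length c.
Proof.
  intros HL eps Heps c Hc. destruct (HL eps Heps) as [N HN].
  destruct (eps_L_sequence_defined_or_finite alpha eps c Hc N) as [HcN|]; [|assumption].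
  destruct (c N) as [m|] eqn:E; [|congruence].
  exists N. split; [congruence|].
  pose proof (eps_L_sequence_index_le alpha eps c Hc N m E) as Hm.
  pose proof (proj2 Hc N) as Hstep. rewrite E in Hstep.
  destruct (c (S N)) as [t|]; [exfalso | reflexivity].
  destruct Hstep as [[Ht HLI] _].
  pose proof (LI_lt_of_Lray_lt alpha m eps (HN m Hm) (t - 1) ltac:(lia)). lra.
Qed.

Lemma hardy_form_skip_first alpha f n b : (n <= b)%nat ->
  hardy_form alpha f (S n) n b = hardy_form alpha f (S n) (S n) b.
Proof.
  intros Hnb. unfold hardy_form. rewrite (sum_n_m_Rsplit _ n n b), sum_n_n by lia.
  rewrite (sum_n_m_zero f (S n) n) by lia. change (@zero C_AbelianMonoid) with (RtoC 0).
  rewrite Cmod_0. ring.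
Qed.

(* Extending [f] by zero to [[c, b]] after dropping [f_n] does not change any increment that
   [l([n, b], f)] sees, and creates the cross terms between [[c, n]] and [(n, b]]. *)
Lemma lIf_extend_left alpha c n b f : (c <= n <= b)%nat -> supported_in f n b ->
  let g := restrict f (S n) b in
  lIf alpha n b f <= lIf alpha c b g /\
  mu alpha c n * lIf alpha n b f <= 2 * mu alpha n b * lIf alpha c b g.
Proof.
  intros Hcnb Hs g.
  assert (Hfg : forall j, (S n <= j <= b)%nat -> f j = g j)
    by (intros j Hj; unfold g; now rewrite restrict_in).
  split.
  - rewrite (lIf_ext_loc alpha n b f g) by exact Hfg. now apply lIf_le_shrink_left.
  - set (S0 := hardy_form alpha g (S n) (S n) b).
    assert (Hcross : 2 * mu alpha c n * S0 <= lIf alpha c b g).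
    { apply lIf_ge_hardy_form; [lia|]. intros j Hj. unfold g. apply restrict_out. lia. }
    assert (Hup : lIf alpha n b f <= 4 * mu alpha n b * S0).
    { unfold S0. rewrite <- (hardy_form_ext_loc alpha f g) by (intros; apply Hfg; lia).
      rewrite <- hardy_form_skip_first by lia. apply lIf_le_hardy_form. lia. }
    pose proof (mu_nonneg alpha c n). pose proof (mu_nonneg alpha n b). nra.
Qed.

Lemma mu_pos_le alpha a b : 0 < mu alpha a b -> (a <= b)%nat.
Proof.
  intros Hmu. destruct (le_lt_dec a b) as [|Hba]; [assumption|].
  unfold mu in Hmu. rewrite sum_n_m_zero in Hmu by exact Hba.
  exact (False_ind _ (Rlt_irrefl 0 Hmu)).
Qed.

Lemma lIf_extend_left_gt alpha c n b f e : (c <= n <= b)%nat -> supported_in f n b ->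
  0 < mu alpha n b -> e ^ 2 * mu alpha n b < lIf alpha n b f ->
  (e / 2) ^ 2 * mu alpha c b < lIf alpha c b (restrict f (S n) b).
Proof.
  intros Hcnb Hs Hmu Hlf.
  destruct (lIf_extend_left alpha c n b f Hcnb Hs) as [H1 H2].
  set (Lg := lIf alpha c b (restrict f (S n) b)) in *.
  assert (Hsplit : mu alpha c b <= mu alpha c n + mu alpha n b).
  { rewrite (mu_Rsplit alpha c n b) by lia.
    pose proof (mu_le_subrange alpha n b (S n) b ltac:(lia) (le_n b)). lra. }
  pose proof (pow2_ge_0 e).
  destruct (Rle_lt_dec (mu alpha c n) (mu alpha n b)) as [Hle|Hlt].
  - assert (e ^ 2 / 4 * mu alpha c b <= e ^ 2 / 2 * mu alpha n b) by nra. nra.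
  - assert (mu alpha c n * (e ^ 2 * mu alpha n b) < mu alpha c n * lIf alpha n b f)
      by (apply Rmult_lt_compat_l; lra).
    assert (e ^ 2 * mu alpha c n < 2 * Lg).
    { apply Rmult_lt_reg_r with (mu alpha n b); [exact Hmu|]. nra. }
    assert (e ^ 2 / 4 * mu alpha c b <= e ^ 2 / 2 * mu alpha c n) by nra. lra.
Qed.

Lemma LI_extend_left alpha c n b e : (c <= n)%nat -> 0 <= e -> e < LI alpha n b ->
  e / 2 < LI alpha c b.
Proof.
  intros Hcn He HLI. destruct (LI_gt_witness alpha n b e He HLI) as [Hmu [f [Hs [Hn Hlf]]]].
  pose proof (mu_pos_le alpha n b Hmu) as Hnb.
  pose proof (lIf_extend_left_gt alpha c n b f e ltac:(lia) Hs Hmu Hlf) as Hkey.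
  set (g := restrict f (S n) b) in *.
  assert (Hgn : norm2I g c b ^ 2 <= 1).
  { unfold g. rewrite norm2I_restrict_sqr by lia.
    eapply Rle_trans; [apply (sum_sqmod_le_norm2I_sqr f n b _ _ Hs)|].
    assert (0 <= norm2I f n b) by apply sqrt_pos. nra. }
  pose proof (lIf_le_LI_sqr_norm2I alpha c b g
                (supported_in_restrict f (S n) b c b ltac:(lia) (le_n b))) as Hg.
  assert (Hmucb : 0 < mu alpha c b)
    by (pose proof (mu_le_subrange alpha c b n b Hcn (le_n b)); lra).
  assert (Hsq : (e / 2) ^ 2 < LI alpha c b ^ 2).
  { apply Rmult_lt_reg_r with (mu alpha c b); [exact Hmucb|].
    assert (LI alpha c b ^ 2 * mu alpha c b * norm2I g c b ^ 2 <= LI alpha c b ^ 2 * mu alpha c b).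
    { rewrite <- Rmult_1_r. apply Rmult_le_compat_l; [|exact Hgn].
      apply Rmult_le_pos; [apply pow2_ge_0 | lra]. }
    lra. }
  pose proof (LI_nonneg alpha c b). nra.
Qed.

Lemma Lcal_is_zero_of_finite_length alpha :
  (forall eps, 0 < eps -> forall c, is_eps_L_sequence alpha eps c -> has_finite_length c) ->
  Lcal_is_zero alpha.
Proof.
  intros Hfin. apply NNPP. intros HL.
  destruct (not_Lcal_is_zero alpha HL) as [e [He Hfar]].
  set (P m t := (m < t)%nat /\ LI alpha m (t - 1) > e / 2).
  assert (Hleast : forall m, exists t, P m t /\ forall t', P m t' -> (t <= t')%nat).
  { intros m. destruct (dec_inh_nat_subset_has_unique_least_element (P m)) as [t [Ht _]].
    - intros t. apply classic.
    - destruct (Hfar m) as [n [b [Hmnb HLI]]]. exists (S b). split; [lia|].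
      replace (S b - 1)%nat with b by lia. apply (LI_extend_left alpha m n b e); lra || lia.
    - now exists t. }
  destruct (choice _ Hleast) as [next Hnext].
  set (c k := Some (Nat.iter k next 0%nat)).
  assert (Hc : is_eps_L_sequence alpha (e / 2) c) by (split; [reflexivity | intros k; apply Hnext]).
  destruct (Hfin (e / 2) ltac:(lra) c Hc) as [N [_ HN]]. discriminate HN.
Qed.

Theorem theorem4p6 (alpha : nat -> C) (Halpha : in_l2 alpha) :
  (compact_l2_operator (Ralpha alpha) <-> Lcal_is_zero alpha) /\
  (Lcal_is_zero alpha <->
     (forall eps : R, 0 < eps ->
        forall c : nat -> option nat, is_eps_L_sequence alpha eps c ->
          has_finite_length c)).
Proof.
  split; split.
  - apply Lcal_is_zero_of_compact.
  - now apply Ralpha_compact.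
  - apply finite_length_of_Lcal_is_zero.
  - apply Lcal_is_zero_of_finite_length.
Qed.
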